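(* For integers $s,t\ge 7$, $${\rm dim}_s(C_s\diamond C_t)=st-4\min\{\lfloor s/3\rfloor,\lfloor t/3\rfloor\}-r,$$ where $r=0$ if $\min\{s,t\}\equiv 0$ or $1 \pmod 3$; $r=1$ if $s=t$ and $\min\{s,t\}\equiv 2\pmod 3$; and $r=2$ if $s\neq t$ and $\min\{s,t\}\equiv 2\pmod 3$.
   Context: The modular product $G\diamond H$ has vertex set $V(G)\times V(H)$; distinct vertices $(g,h)$ and $(g',h')$ are adjacent iff ($g=g'$ and $hh'\in E(H)$), or ($gg'\in E(G)$ and $h=h'$), or ($gg'\in E(G)$ and $hh'\in E(H)$), or ($g\neq g'$, $h\neq h'$, $gg'\notin E(G)$ and $hh'\notin E(H)$). $C_n$ is the cycle on $n$ vertices. For a connected graph $X$, a vertex $z$ strongly resolves distinct vertices $x,y$ if $d_X(y,z)=d_X(y,x)+d_X(x,z)$ or $d_X(x,z)=d_X(x,y)+d_X(y,z)$; ${\rm dim}_s(X)$ is the minimum cardinality of a set $S\subseteq V(X)$ such that every pair of distinct vertices is strongly resolved by some vertex of $S$. *)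

From mathcomp Require Import all_boot.
Set Implicit Arguments. Unset Strict Implicit. Unset Printing Implicit Defensive.

(* Simple graphs: vertex finType T with adjacency relation e (symmetric, irreflexive). *)

Definition cycle_adj (n : nat) : rel 'I_n :=
  fun i j => (j == (i.+1 %% n) :> nat) || (i == (j.+1 %% n) :> nat).
Arguments cycle_adj : clear implicits.

Definition modprod (T U : finType) (eG : rel T) (eH : rel U) : rel (T * U) :=
  fun p q =>
    let: (g, h) := p in let: (g', h') := q in
    (p != q) &&
    [|| (g == g') && eH h h',
        eG g g' && (h == h'),
        eG g g' && eH h h'
      | [&& g != g', h != h', ~~ eG g g' & ~~ eH h h']].

Fixpoint reach (T : finType) (e : rel T) (k : nat) (x y : T) : bool :=
  match k with
  | 0 => x == y
  | k'.+1 => reach e k' x y || [exists z, reach e k' x z && e z y]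
  end.

(* Graph distance: least k with a walk of length k (for a connected graph this
   is attained below #|T|; otherwise it returns #|T|). *)
Definition gdist (T : finType) (e : rel T) (x y : T) : nat :=
  find (fun k => reach e k x y) (iota 0 #|T|).

Definition connected_graph (T : finType) (e : rel T) : Prop :=
  forall x y : T, exists k, reach e k x y.

Definition strongly_resolves (T : finType) (e : rel T) (z x y : T) : bool :=
  (gdist e y z == gdist e y x + gdist e x z) ||
  (gdist e x z == gdist e x y + gdist e y z).

Definition strong_resolving_set (T : finType) (e : rel T) (S : {set T}) : Prop :=
  forall x y : T, x != y -> exists2 z, z \in S & strongly_resolves e z x y.

Definition is_strong_metric_dim (T : finType) (e : rel T) (n : nat) : Prop :=
  (exists S : {set T}, strong_resolving_set e S /\ #|S| = n) /\
  (forall S : {set T}, strong_resolving_set e S -> n <= #|S|).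

(* In C_s ◇ C_t (s, t >= 7) any two vertices have a common neighbour, so distances are at most
   two; a non-adjacent pair is then strongly resolved only by its own ends, and the strong
   resolving sets are exactly the complements of cliques.  Hence dim_s = st - w, w the clique
   number.  Two vertices are adjacent iff their coordinates are equal-or-adjacent in both cycles
   or in neither, so a clique meets each column in at most two vertices and three consecutive
   columns in at most four, or three if one of them holds a single vertex.  Averaging over the
   s windows (with a parity argument when s = 1 mod 3) gives w <= 4 (s/3) + 2 [s = 2 mod 3],
   and symmetrically for t.  If s = t = 2 mod 3, a clique reaching that bound has no column or
   row with a single vertex; its two-vertex columns then pair up, so its size is divisible
   by 4, which it is not.  Diagonal 2x2 blocks attain the bound. *)

From mathcomp Require Import all_boot zify.
Set Implicit Arguments. Unset Strict Implicit. Unset Printing Implicit Defensive.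

Definition closed_adj (T : eqType) (e : rel T) : rel T := fun x y => (x == y) || e x y.

Definition clique (T : finType) (e : rel T) (K : {set T}) : Prop :=
  {in K &, forall x y, x != y -> e x y}.

Definition adj_coherent (S T : eqType) (eS : rel S) (eT : rel T) (K : {pred S * T}) : Prop :=
  {in K &, forall p q, closed_adj eS p.1 q.1 = closed_adj eT p.2 q.2}.

Lemma closed_adj_refl (T : eqType) (e : rel T) : reflexive (closed_adj e).
Proof. by move=> x; rewrite /closed_adj eqxx. Qed.

Lemma closed_adj_sym (T : eqType) (e : rel T) : symmetric e -> symmetric (closed_adj e).
Proof. by move=> e_sym x y; rewrite /closed_adj eq_sym e_sym. Qed.

Lemma closed_adj_neq (T : eqType) (e : rel T) x y : ~~ closed_adj e x y -> x != y.
Proof. by apply: contraNneq => ->; exact: closed_adj_refl. Qed.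

Section DiameterTwo.
Variables (T : finType) (e : rel T).
Hypotheses (e_sym : symmetric e) (e_irr : irreflexive e).
Hypothesis common_nbr : forall x y, exists z, e x z && e z y.
Hypothesis card_gt2 : 2 < #|T|.

Lemma gdist_diam2 x y : gdist e x y = if x == y then 0 else if e x y then 1 else 2.
Proof.
have step u v : [exists w, (u == w) && e w v] = e u v.
  by apply/existsP/idP => [[w /andP [/eqP <-]]|uv] //; exists u; rewrite eqxx.
rewrite /gdist -(subnKC card_gt2) /= !step.
case: (x =P y) => //= _; case: (e x y) => //=.
have [z /andP [xz zy]] := common_nbr x y.
rewrite (_ : [exists _, _] = true) //.
by apply/existsP; exists z; rewrite step xz zy orbT.
Qed.

Lemma strongly_resolves_nonadj z x y :
  x != y -> ~~ e x y -> strongly_resolves e z x y -> z = x \/ z = y.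
Proof.
move=> xy nxy; case: (x =P z) => [->|/eqP xz]; first by left.
case: (y =P z) => [->|/eqP yz]; first by right.
rewrite /strongly_resolves !gdist_diam2 (eq_sym y x) (negbTE xy).
rewrite (negbTE xz) (negbTE yz) (e_sym y x) (negbTE nxy).
by case: (e x z); case: (e y z).
Qed.

Lemma strong_resolving_clique S : strong_resolving_set e S -> clique e (~: S).
Proof.
move=> HS x y; rewrite !inE => xS yS xy; apply: contraNT xS => nxy.
have [z zS /(strongly_resolves_nonadj xy nxy) [] zE] := HS x y xy; subst z => //.
by rewrite zS in yS.
Qed.

Hypothesis edge_ext : forall x y, e x y -> exists z, [&& e x z, ~~ e z y & z != y].

Lemma clique_strong_resolving K : clique e K -> strong_resolving_set e (~: K).
Proof.
move=> HK x y xy; rewrite /strongly_resolves.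
have [xK|xK] := boolP (x \in K); last first.
  by exists x; rewrite ?inE // !gdist_diam2 eqxx addn0 eqxx.
have [yK|yK] := boolP (y \in K); last first.
  by exists y; rewrite ?inE // !gdist_diam2 eqxx addn0 eqxx orbT.
have exy := HK x y xK yK xy.
have [z /and3P [xz nzy zy]] := edge_ext exy.
exists z.
  by rewrite inE; apply: contraNN nzy => zK; exact: HK.
have xz' : x != z by apply: contraTneq xz => ->; rewrite e_irr.
rewrite !gdist_diam2 !(eq_sym y) (negbTE xy) (negbTE zy) (negbTE xz') !(e_sym y).
by rewrite exy (negbTE nzy) xz.
Qed.

Lemma strong_metric_dim_clique w :
  (exists K, clique e K /\ #|K| = w) -> (forall K, clique e K -> #|K| <= w) ->
  is_strong_metric_dim e (#|T| - w).
Proof.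
move=> [K [HK <-]] Hmax; split.
  by exists (~: K); split; [exact: clique_strong_resolving | rewrite -(cardsC K) addKn].
move=> S /strong_resolving_clique /Hmax; have := cardsC S; lia.
Qed.

End DiameterTwo.

Section ModularProduct.
Variables (T U : finType) (eG : rel T) (eH : rel U).
Hypotheses (eG_irr : irreflexive eG) (eH_irr : irreflexive eH).

Lemma modprodE p q :
  modprod eG eH p q = (p != q) && (closed_adj eG p.1 q.1 == closed_adj eH p.2 q.2).
Proof.
case: p q => [g h] [g' h'] /=; rewrite /closed_adj.
case: (g =P g') => [<-|/eqP gg']; case: (h =P h') => [<-|/eqP hh'];
  rewrite ?eG_irr ?eH_irr ?eqxx ?xpair_eqE ?(negbTE gg') ?(negbTE hh') ?andbF //=;
  by case: (eG g g'); case: (eH h h').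
Qed.

Lemma modprod_sym : symmetric eG -> symmetric eH -> symmetric (modprod eG eH).
Proof.
by move=> sG sH p q; rewrite !modprodE eq_sym !(closed_adj_sym sG p.1) !(closed_adj_sym sH p.2).
Qed.

Lemma clique_modprodP (K : {set T * U}) : clique (modprod eG eH) K <-> adj_coherent eG eH K.
Proof.
split=> HK p q Kp Kq.
  have [<-|pq] := eqVneq p q; first by rewrite !closed_adj_refl.
  by have := HK p q Kp Kq pq; rewrite modprodE pq => /eqP.
by move=> pq; rewrite modprodE pq (HK p q Kp Kq) eqxx.
Qed.

End ModularProduct.

Definition fiber (S T : finType) (K : {set S * T}) (g : S) : {set T} := [set h | (g, h) \in K].

Definition transpose_set (S T : finType) (K : {set S * T}) : {set T * S} :=
  [set (p.2, p.1) | p in K].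

Lemma card_fibers (S T : finType) (K : {set S * T}) : #|K| = \sum_g #|fiber K g|.
Proof.
rewrite (eq_bigr (fun g => \sum_(h | (g, h) \in K) 1)); last first.
  by move=> g _; rewrite -sum1_card; apply: eq_bigl => h; rewrite inE.
by rewrite pair_big_dep /= -sum1_card; apply: eq_bigl => -[].
Qed.

Lemma mem_transpose_set (S T : finType) (K : {set S * T}) g h :
  ((h, g) \in transpose_set K) = ((g, h) \in K).
Proof.
have swap_inj : injective (fun p : S * T => (p.2, p.1)) by move=> [? ?] [? ?] [-> ->].
by rewrite -[(h, g)]/((fun p : S * T => (p.2, p.1)) (g, h)) mem_imset.
Qed.

Lemma transpose_set_coherent (S T : finType) (eS : rel S) (eT : rel T) (K : {set S * T}) :
  adj_coherent eS eT K -> adj_coherent eT eS (transpose_set K).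
Proof.
move=> HK [h g] [h' g']; rewrite !mem_transpose_set => Kgh Kgh'.
by rewrite (HK _ _ Kgh Kgh').
Qed.

Lemma card_transpose_set (S T : finType) (K : {set S * T}) : #|transpose_set K| = #|K|.
Proof. by rewrite card_imset // => -[? ?] [? ?] [-> ->]. Qed.

Section Cycle.
Variable n : nat.
Implicit Types a b c : 'I_n.
Local Notation close := (closed_adj (cycle_adj n)).

Lemma cycle_adjE a b : cycle_adj n a b = (b == ordS a) || (a == ordS b).
Proof. by []. Qed.

Lemma ordS_val a : ordS a = (if a.+1 == n then 0 else a.+1) :> nat.
Proof.
have := ltn_ord a; rewrite /=; case: eqP => [->|/eqP ne]; first by rewrite modnn.
by move=> lt_an; rewrite modn_small //; lia.
Qed.

Lemma ordS_modE a : a.+1 %% n = (if a.+1 == n then 0 else a.+1).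
Proof. exact: ordS_val. Qed.

Lemma cycle_closeE a b : close a b =
  [|| a == b :> nat, b == a.+1 :> nat, a == b.+1 :> nat,
      (a == n.-1 :> nat) && (b == 0 :> nat) | (b == n.-1 :> nat) && (a == 0 :> nat)].
Proof.
rewrite /closed_adj /cycle_adj -val_eqE /= !ordS_modE.
have := ltn_ord a; have := ltn_ord b.
by case: (a.+1 =P n); case: (b.+1 =P n) => *; apply/idP/idP; lia.
Qed.

Lemma cycle_adj_sym : symmetric (cycle_adj n).
Proof. by move=> a b; rewrite !cycle_adjE orbC. Qed.

Lemma cycle_adj_irr : 2 < n -> irreflexive (cycle_adj n).
Proof.
move=> n_gt2 a; rewrite /cycle_adj orbb ordS_modE; have := ltn_ord a.
by case: (a.+1 =P n); case: eqP; lia.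
Qed.

Lemma cycle_adj_ordS a : cycle_adj n a (ordS a).
Proof. by rewrite cycle_adjE eqxx. Qed.

Lemma cycle_adj_ordS_nbr a b : cycle_adj n (ordS a) b -> b = a \/ b = ordS (ordS a).
Proof. by rewrite cycle_adjE => /orP [/eqP|/eqP/ordS_inj]; [right | left]. Qed.

Lemma cycle_close_ordS a : close a (ordS a).
Proof. by rewrite /closed_adj cycle_adj_ordS orbT. Qed.

Lemma cycle_far_ordS2 a : 4 < n -> ~~ close a (ordS (ordS a)).
Proof.
move=> n_gt4; rewrite cycle_closeE !ordS_val; have := ltn_ord a.
by move=> ?; case: (a.+1 =P n) => ? /=; case: ifP => /eqP ?; lia.
Qed.

Lemma cycle_close_triangle a b c : 3 < n -> a != b -> b != c -> a != c ->
  close a b -> close b c -> close a c -> False.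
Proof.
move=> n_gt3; rewrite -!val_eqE !cycle_closeE /=.
by have := ltn_ord a; have := ltn_ord b; have := ltn_ord c; lia.
Qed.

Lemma cycle_close_cases a b : close a b -> [\/ b = a, b = ordS a | b = ord_pred a].
Proof.
rewrite /closed_adj cycle_adjE.
by case/or3P => /eqP ->; rewrite ?ordSK; [apply: Or31 | apply: Or32 | apply: Or33].
Qed.

Lemma exists_cycle_far2 a b : 6 < n -> exists c, ~~ close a c && ~~ close b c.
Proof.
move=> n_gt6; set U := [set c | close a c || close b c].
have U_le6 : #|U| <= 6.
  apply: leq_trans (card_size ([:: a; ordS a; ord_pred a] ++ [:: b; ordS b; ord_pred b])).
  apply: subset_leq_card; apply/subsetP => c; rewrite !inE.
  by case/orP => /cycle_close_cases [] ->; rewrite eqxx ?orbT.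
have [c] : exists c, c \in ~: U.
  by apply/card_gt0P; have := cardsC U; rewrite card_ord; lia.
by rewrite !inE negb_or; exists c.
Qed.

Lemma exists_cycle_close_far a b : 4 < n -> a != b -> exists c, close b c && ~~ close a c.
Proof.
move=> n_gt4 ab; have close_sym := closed_adj_sym cycle_adj_sym.
have [ab_close|ab_far] := boolP (close a b); last by exists b; rewrite closed_adj_refl.
have [->|->] : b = ordS a \/ a = ordS b.
  move: ab_close; rewrite /closed_adj (negbTE ab) /= cycle_adjE.
  by case/orP => /eqP; [left | right].
- by exists (ordS (ordS a)); rewrite cycle_far_ordS2 // /closed_adj cycle_adj_ordS orbT.
- exists (ord_pred b); rewrite -[in ordS b](ord_predK b) (close_sym (ordS _)).
  by rewrite cycle_far_ordS2 // andbT -{1}(ord_predK b) close_sym /closed_adj cycle_adj_ordS orbT.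
Qed.

Lemma cycle_close_small a b :
  a.+1 < n -> b.+1 < n -> close a b = (a <= b.+1) && (b <= a.+1).
Proof. by move=> an bn; rewrite cycle_closeE; apply/idP/idP; lia. Qed.

Lemma uniq_ordS3 a : 4 < n -> uniq [:: a; ordS a; ordS (ordS a)].
Proof.
move=> n_gt4; have ordS_neq b : b != ordS b.
  by apply: contraTneq (cycle_adj_ordS b) => <-; rewrite cycle_adj_irr //; lia.
by rewrite /= !inE !negb_or !ordS_neq (closed_adj_neq (cycle_far_ordS2 a n_gt4)).
Qed.

End Cycle.

Section CycleProduct.
Variables s t : nat.
Hypotheses (s_gt6 : 6 < s) (t_gt6 : 6 < t).
Local Notation G := (modprod (cycle_adj s) (cycle_adj t)).
Local Notation close := (closed_adj (cycle_adj _)).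

Lemma cycle_modprodE p q : G p q = (p != q) && (close p.1 q.1 == close p.2 q.2).
Proof. by apply: modprodE; apply: cycle_adj_irr; lia. Qed.

Lemma cycle_modprod_common_nbr x y : exists z, G x z && G z y.
Proof.
have close_sym n := closed_adj_sym (@cycle_adj_sym n).
have [a /andP [xa ya]] := exists_cycle_far2 x.1 y.1 s_gt6.
have [b /andP [xb yb]] := exists_cycle_far2 x.2 y.2 t_gt6.
exists (a, b); rewrite !cycle_modprodE /= (close_sym _ a) (close_sym _ b).
rewrite (negbTE xa) (negbTE ya) (negbTE xb) (negbTE yb) !eqxx !andbT.
case: x y xa ya {xb yb} => [g h] [g' h'] /= /closed_adj_neq ga /closed_adj_neq g'a.
  by rewrite !xpair_eqE (negbTE ga) (eq_sym a) (negbTE g'a).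
Qed.

Lemma cycle_modprod_edge_ext x y : G x y -> exists z, [&& G x z, ~~ G z y & z != y].
Proof.
have close_sym n := closed_adj_sym (@cycle_adj_sym n).
case: x y => [g h] [g' h']; rewrite cycle_modprodE xpair_eqE => /andP [xy _].
have [eq_gg'|gg'] := eqVneq g g'.
- subst g'; have hh' : h != h' by move: xy; rewrite eqxx.
  have [c /andP [h'c hc]] := exists_cycle_close_far (ltnW (ltnW t_gt6)) hh'.
  have [a /andP [ga _]] := exists_cycle_far2 g g s_gt6.
  exists (a, c); rewrite !cycle_modprodE /= !xpair_eqE (close_sym _ a) (close_sym _ c).
  rewrite (negbTE ga) (negbTE hc) h'c (negbTE (closed_adj_neq ga)).
  by rewrite (eq_sym a) (negbTE (closed_adj_neq ga)).
- have [c /andP [g'c gc]] := exists_cycle_close_far (ltnW (ltnW s_gt6)) gg'.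
  have [b /andP [hb h'b]] := exists_cycle_far2 h h' t_gt6.
  exists (c, b); rewrite !cycle_modprodE /= !xpair_eqE (close_sym _ c) (close_sym _ b).
  rewrite (negbTE gc) (negbTE hb) g'c (negbTE h'b) (negbTE (closed_adj_neq hb)).
  by rewrite (eq_sym b) (negbTE (closed_adj_neq h'b)) !andbF.
Qed.

End CycleProduct.

Section CoherentFibers.
Variables (s t : nat) (K : {set 'I_s * 'I_t}).
Local Notation close := (closed_adj (cycle_adj _)).
Hypothesis t_gt3 : 3 < t.
Hypothesis K_coherent : adj_coherent (cycle_adj s) (cycle_adj t) K.

Lemma fiber_close g g' h h' : h \in fiber K g -> h' \in fiber K g' -> close g g' = close h h'.
Proof. by rewrite !inE => Kgh Kgh'; exact: K_coherent Kgh Kgh'. Qed.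

Lemma card_fiber_le2 g : #|fiber K g| <= 2.
Proof.
rewrite leqNgt; apply/negP => /card_geqP [abc [+ + sub]].
case: abc sub => [|a [|b [|c []]]] // sub.
rewrite /= !inE !negb_or => /and3P [/andP [ab ac] bc _] _.
have cl u v : u \in [:: a; b; c] -> v \in [:: a; b; c] -> close u v.
  by move=> /sub u_g /sub v_g; rewrite -(fiber_close u_g v_g) closed_adj_refl.
by apply: (cycle_close_triangle t_gt3 ab bc ac); apply: cl; rewrite !inE eqxx ?orbT.
Qed.

Lemma fiber_sub g g' : close g g' -> #|fiber K g'| = 2 -> fiber K g \subset fiber K g'.
Proof.
move=> gg' /eqP/cards2P [h [h' [hh' Eg']]]; apply/subsetP => u u_g.
have h_g' : h \in fiber K g' by rewrite Eg' !inE eqxx.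
have h'_g' : h' \in fiber K g' by rewrite Eg' !inE eqxx orbT.
rewrite Eg' !inE; apply/negPn/negP; rewrite negb_or => /andP [uh uh'].
apply: (cycle_close_triangle t_gt3 uh hh' uh').
- by rewrite -(fiber_close u_g h_g').
- by rewrite -(fiber_close h_g' h'_g') closed_adj_refl.
- by rewrite -(fiber_close u_g h'_g').
Qed.

Lemma fiber_path0 a b c : close a b -> close b c -> ~~ close a c ->
  0 < #|fiber K b| -> #|fiber K c| = 2 -> #|fiber K a| = 0.
Proof.
move=> ab bc ac /card_gt0P [u u_b] c2; apply: eq_card0 => v; apply/negbTE.
apply/negP => v_a; have u_c := subsetP (fiber_sub bc c2) u u_b.
by move: (fiber_close v_a u_b) (fiber_close v_a u_c); rewrite ab (negbTE ac) => <-.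
Qed.

Lemma fiber_peak0 a b c : close a b -> close c b -> ~~ close a c ->
  #|fiber K b| = 2 -> #|fiber K a| = 0 \/ #|fiber K c| = 0.
Proof.
move=> ab cb ac b2; have [|/card_gt0P [u u_a]] := posnP #|fiber K a|; [by left | right].
apply: eq_card0 => v; apply/negbTE/negP => v_c.
have u_b := subsetP (fiber_sub ab b2) u u_a; have v_b := subsetP (fiber_sub cb b2) v v_c.
move: (fiber_close u_a v_c) (fiber_close u_b v_b).
by rewrite (negbTE ac) closed_adj_refl => <-.
Qed.

Lemma fiber_spread i : (forall h, #|fiber (transpose_set K) h| != 1) ->
  0 < #|fiber K (ordS i)| -> 0 < #|fiber K i| \/ 0 < #|fiber K (ordS (ordS i))|.
Proof.
move=> row_ne1 /card_gt0P [h h_i].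
have i_h : ordS i \in fiber (transpose_set K) h.
  by rewrite inE mem_transpose_set; rewrite inE in h_i.
have [g] : exists g, g \in fiber (transpose_set K) h :\ ordS i.
  apply/card_gt0P; move: (row_ne1 h) (cardsD1 (ordS i) (fiber (transpose_set K) h)).
  by rewrite i_h; lia.
rewrite !inE mem_transpose_set => /andP [g_i Kgh].
have h_g : h \in fiber K g by rewrite inE.
have : close g (ordS i) by rewrite (fiber_close h_g h_i) closed_adj_refl.
rewrite /closed_adj (negbTE g_i) cycle_adj_sym => /cycle_adj_ordS_nbr [] <-; [left | right];
  by apply/card_gt0P; exists h.
Qed.

End CoherentFibers.

Lemma sum_ordS n (F : 'I_n -> nat) : \sum_(i < n) F (ordS i) = \sum_(i < n) F i.
Proof. by rewrite [RHS](reindex_inj (@ordS_inj n)). Qed.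

Definition clique_bound n := 4 * (n %/ 3) + (if n %% 3 == 2 then 2 else 0).

Section ColumnProfile.
Variables (n : nat) (A : 'I_n -> nat).
Hypothesis n_gt4 : 4 < n.
Hypothesis A_le2 : forall i, A i <= 2.
Hypothesis A_path0 : forall i, 0 < A (ordS i) -> A (ordS (ordS i)) = 2 -> A i = 0.
Hypothesis A_path0' : forall i, 0 < A (ordS i) -> A i = 2 -> A (ordS (ordS i)) = 0.
Hypothesis A_peak0 : forall i, A (ordS i) = 2 -> A i = 0 \/ A (ordS (ordS i)) = 0.

Let window i := A i + A (ordS i) + A (ordS (ordS i)).

Lemma window_le4 i : window i <= 4.
Proof.
rewrite /window; have := A_le2 i; have := A_le2 (ordS i); have := A_le2 (ordS (ordS i)).
have := @A_path0 i; have := @A_path0' i; have := @A_peak0 i; lia.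
Qed.

Lemma window_le3 i :
  [\/ A i = 1, A (ordS i) = 1 | A (ordS (ordS i)) = 1] -> window i <= 3.
Proof.
rewrite /window; have := A_le2 i; have := A_le2 (ordS i); have := A_le2 (ordS (ordS i)).
have := @A_path0 i; have := @A_path0' i; have := @A_peak0 i.
by move=> ? ? ? ? ? ? [] ?; lia.
Qed.

Lemma sum_window : \sum_i window i = 3 * \sum_i A i.
Proof.
rewrite /window !big_split /= (sum_ordS (fun i => A (ordS i))) !sum_ordS.
by rewrite !mulSn mul0n addn0 addnA.
Qed.

Lemma profile_sum_le : 3 * \sum_i A i <= 4 * n.
Proof.
rewrite -sum_window; apply: (@leq_trans (\sum_(k < n) 4)).
  by apply: leq_sum => k _; exact: window_le4.
by rewrite big_const_ord iter_addn_0 mulnC.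
Qed.

Lemma profile_sum_le_one j : A j = 1 -> 3 * \sum_i A i + 3 <= 4 * n.
Proof.
move=> Aj; set i := ord_pred (ord_pred j).
have Ej : j = ordS (ordS i) by rewrite /i !ord_predK.
have three_low : 3 <= #|[set k | window k <= 3]|.
  apply/card_geqP; exists [:: i; ordS i; ordS (ordS i)]; split => //; first exact: uniq_ordS3.
  move=> k; rewrite !inE -Ej => /or3P [] /eqP ->; apply: window_le3; rewrite -?Ej.
  - exact: Or33.
  - exact: Or32.
  - exact: Or31.
have : \sum_k window k + #|[set k | window k <= 3]| <= 4 * n.
  rewrite -sum1dep_card [X in _ + X]big_mkcond -big_split /=.
  apply: (@leq_trans (\sum_(k < n) 4)); last by rewrite big_const_ord iter_addn_0 mulnC.
  by apply: leq_sum => k _; have := window_le4 k; case: (leqP (window k) 3); lia.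
by rewrite sum_window; lia.
Qed.

Lemma profile_sum_even : (forall i, A i != 1) -> 2 %| \sum_i A i.
Proof.
move=> no1; rewrite (eq_bigr (fun i => 2 * (A i == 2))) => [|i _].
  by rewrite -big_distrr dvdn_mulr.
by have := A_le2 i; have := no1 i; case: eqP; lia.
Qed.

Lemma profile_sum_dvd4 : (forall i, A i != 1) ->
  (forall i, 0 < A (ordS i) -> 0 < A i \/ 0 < A (ordS (ordS i))) -> 4 %| \sum_i A i.
Proof.
move=> no1 spread; pose E i := ((A i == 2) && (A (ordS i) == 2) : nat).
(* A two-vertex column has exactly one two-vertex neighbour, so such columns pair up. *)
have AE i : A (ordS i) = 2 * (E i + E (ordS i)).
  have := A_le2 i; have := A_le2 (ordS i); have := A_le2 (ordS (ordS i)).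
  have := no1 i; have := no1 (ordS i); have := no1 (ordS (ordS i)).
  have := @A_peak0 i; have := @spread i; rewrite /E.
  by case: (A i =P 2); case: (A (ordS i) =P 2); case: (A (ordS (ordS i)) =P 2); lia.
rewrite -sum_ordS (eq_bigr _ (fun i _ => AE i)) -big_distrr big_split /= sum_ordS.
by rewrite addnn -mul2n mulnA dvdn_mulr.
Qed.

Lemma profile_sum_le_clique_bound : \sum_i A i <= clique_bound n.
Proof.
rewrite /clique_bound; case: (pickP (fun i => A i == 1)) => [j /eqP Aj|no1].
  by have := profile_sum_le_one Aj; case: ifP; lia.
have := profile_sum_le; have := @profile_sum_even (fun i => negbT (no1 i)).
by case: ifP; lia.
Qed.

End ColumnProfile.

Section CoherentBound.
Variables (s t : nat) (K : {set 'I_s * 'I_t}).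
Hypotheses (s_gt4 : 4 < s) (t_gt3 : 3 < t).
Hypothesis K_coherent : adj_coherent (cycle_adj s) (cycle_adj t) K.

Let A i := #|fiber K i|.
Let close_sym := closed_adj_sym (@cycle_adj_sym s).

Let A_le2 i : A i <= 2. Proof. exact: card_fiber_le2. Qed.

Let A_path0 i : 0 < A (ordS i) -> A (ordS (ordS i)) = 2 -> A i = 0.
Proof. by apply: fiber_path0; rewrite ?cycle_close_ordS ?cycle_far_ordS2. Qed.

Let A_path0' i : 0 < A (ordS i) -> A i = 2 -> A (ordS (ordS i)) = 0.
Proof.
by apply: fiber_path0; rewrite // 1?close_sym ?cycle_close_ordS ?cycle_far_ordS2.
Qed.

Let A_peak0 i : A (ordS i) = 2 -> A i = 0 \/ A (ordS (ordS i)) = 0.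
Proof.
apply: fiber_peak0; rewrite // ?cycle_far_ordS2 ?cycle_close_ordS //.
by rewrite close_sym cycle_close_ordS.
Qed.

Lemma card_coherent_le : #|K| <= clique_bound s.
Proof.
by rewrite card_fibers; exact: profile_sum_le_clique_bound A_le2 A_path0 A_path0' A_peak0.
Qed.

Lemma card_coherent_fiber_ne1 : 4 * s < 3 * #|K| + 3 -> forall i, #|fiber K i| != 1.
Proof.
move=> K_big i; apply/eqP => /(profile_sum_le_one s_gt4 A_le2 A_path0 A_path0' A_peak0).
by rewrite -card_fibers leqNgt K_big.
Qed.

Lemma card_coherent_dvd4 : (forall i, #|fiber K i| != 1) ->
  (forall h, #|fiber (transpose_set K) h| != 1) -> 4 %| #|K|.
Proof.
move=> col_ne1 row_ne1; rewrite card_fibers.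
by apply: profile_sum_dvd4 s_gt4 A_le2 A_peak0 col_ne1 _ => i; exact: fiber_spread.
Qed.

End CoherentBound.

Lemma card_coherent_lt_square n (K : {set 'I_n * 'I_n}) : 6 < n -> n %% 3 = 2 ->
  adj_coherent (cycle_adj n) (cycle_adj n) K -> #|K| < clique_bound n.
Proof.
move=> n_gt6 n_mod3 HK; rewrite ltnNge; apply/negP => K_big.
have n_gt4 : 4 < n by lia.
have n_gt3 : 3 < n by lia.
have K_gt : 4 * n < 3 * #|K| + 3 by move: K_big; rewrite /clique_bound n_mod3 /=; lia.
have col_ne1 := card_coherent_fiber_ne1 n_gt4 n_gt3 HK K_gt.
have row_ne1 := card_coherent_fiber_ne1 n_gt4 n_gt3 (transpose_set_coherent HK).
rewrite card_transpose_set in row_ne1.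
have := card_coherent_dvd4 n_gt4 n_gt3 HK col_ne1 (row_ne1 K_gt).
move: K_big (card_coherent_le n_gt4 n_gt3 HK); rewrite /clique_bound n_mod3 /=; lia.
Qed.

Definition cycle_modprod_clique_number s t :=
  4 * minn (s %/ 3) (t %/ 3) +
  (if (minn s t %% 3 == 0) || (minn s t %% 3 == 1) then 0 else if s == t then 1 else 2).

Lemma card_coherent_le_clique_number s t (K : {set 'I_s * 'I_t}) : 6 < s -> 6 < t ->
  adj_coherent (cycle_adj s) (cycle_adj t) K -> #|K| <= cycle_modprod_clique_number s t.
Proof.
move=> s_gt6 t_gt6 HK.
have [s_gt4 t_gt4] : 4 < s /\ 4 < t by lia.
have le_s := card_coherent_le s_gt4 (ltnW t_gt4) HK.
have le_t : #|K| <= clique_bound t.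
  rewrite -card_transpose_set; apply: card_coherent_le t_gt4 (ltnW s_gt4) _.
  exact: transpose_set_coherent.
rewrite /cycle_modprod_clique_number; have [eq_st|ne_st] := eqVneq s t.
  subst t; rewrite !minnn; have [s_mod3|s_mod3] := eqVneq (s %% 3) 2.
    have := card_coherent_lt_square s_gt6 s_mod3 HK.
    by rewrite /clique_bound s_mod3 /=; lia.
  by move: le_s; rewrite /clique_bound (negbTE s_mod3); case: ifP => ?; lia.
by move: le_s le_t; rewrite /clique_bound; do ![case: ifP => ?]; lia.
Qed.

Definition ord_mod n (n_gt0 : 0 < n) (a : nat) : 'I_n := Ordinal (ltn_pmod a n_gt0).

(* The diagonal blocks {3i, 3i+1}^2, stopping short of the last row and column so that
   the wrap-around edges of the cycles never join two of their points. *)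
Definition diag_blocks s t : {set 'I_s * 'I_t} :=
  [set p : 'I_s * 'I_t |
    [&& p.1 %/ 3 == p.2 %/ 3, p.1 %% 3 < 2, p.2 %% 3 < 2, p.1.+1 < s & p.2.+1 < t]].

Lemma diag_blocks_coherent s t : adj_coherent (cycle_adj s) (cycle_adj t) (diag_blocks s t).
Proof.
move=> [a b] [c d]; rewrite !inE /= => /and5P [ab a3 b3 a_s b_t] /and5P [cd c3 d3 c_s d_t].
by rewrite !cycle_close_small //; apply/idP/idP; lia.
Qed.

Section Construction.
Variables s t : nat.
Hypotheses (s_gt6 : 6 < s) (t_gt6 : 6 < t).
Local Notation k := (minn (s %/ 3) (t %/ 3)).

Let s_gt0 : 0 < s. Proof. exact: ltn_trans s_gt6. Qed.
Let t_gt0 : 0 < t. Proof. exact: ltn_trans t_gt6. Qed.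
Let ords := ord_mod s_gt0.
Let ordt := ord_mod t_gt0.

Let full_blocks : {set 'I_s * 'I_t} :=
  [set (ords (3 * p.1.1 + p.1.2), ordt (3 * p.1.1 + p.2)) | p : 'I_k * bool * bool].

(* When min(s, t) = 3k + 2 a truncated block still fits at index k. *)
Let last_block : {set 'I_s * 'I_t} :=
  if minn s t %% 3 == 2 then
    [set (ords (3 * k), ordt (3 * k)); (ords (3 * k + (t < s)), ordt (3 * k + (s < t)))]
  else set0.

Lemma card_full_blocks : #|full_blocks| = 4 * k.
Proof.
rewrite card_imset ?card_prod ?card_ord ?card_bool; first lia.
move=> [[i x] y] [[i' x'] y'] [].
have ik := ltn_ord i; have ik' := ltn_ord i'.
rewrite !modn_small; try lia.
move=> Ex Ey; have Ei : i = i' by apply: ord_inj; lia.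
by subst i'; congr (_, _, _); [case: x x' Ex | case: y y' Ey] => [] [] //=; lia.
Qed.

Lemma full_blocks_sub : full_blocks \subset diag_blocks s t.
Proof.
apply/subsetP => _ /imsetP [[[i x] y] _ ->]; have ik := ltn_ord i.
by rewrite inE /= !(@modn_small _ s) ?(@modn_small _ t); lia.
Qed.

Lemma last_block_sub : last_block \subset diag_blocks s t.
Proof.
rewrite /last_block; case: ifP => [m_mod3|_]; last exact: sub0set.
apply/subsetP => p; rewrite !inE => /orP [] /eqP -> /=;
  by rewrite !(@modn_small _ s) ?(@modn_small _ t); lia.
Qed.

Lemma disjoint_full_last_blocks : [disjoint full_blocks & last_block].
Proof.
rewrite disjoints_subset; apply/subsetP => _ /imsetP [[[i x] y] _ ->]; have ik := ltn_ord i.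
rewrite /last_block inE; case: ifP => [/eqP m_mod3|_]; last by rewrite inE.
rewrite !inE !xpair_eqE -!val_eqE /= !(@modn_small _ s) ?(@modn_small _ t); lia.
Qed.

Lemma card_last_block : #|last_block| =
  if (minn s t %% 3 == 0) || (minn s t %% 3 == 1) then 0 else if s == t then 1 else 2.
Proof.
rewrite /last_block; case: ifP => [/eqP m_mod3|m_mod3]; last first.
  by rewrite cards0; case: ifP => // /norP [/eqP ? /eqP ?]; move/negbT/eqP: m_mod3; lia.
rewrite cards2 xpair_eqE -!val_eqE /= !(@modn_small _ s) ?(@modn_small _ t); try lia.
rewrite m_mod3 /=; have [<-|ne] := eqVneq s t; first by rewrite ltnn addn0 eqxx.
lia.
Qed.

Lemma card_diag_blocks_ge : cycle_modprod_clique_number s t <= #|diag_blocks s t|.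
Proof.
have sub : full_blocks :|: last_block \subset diag_blocks s t.
  by rewrite subUset full_blocks_sub last_block_sub.
apply: leq_trans (subset_leq_card sub).
rewrite cardsU (disjoint_setI0 disjoint_full_last_blocks) cards0 subn0.
by rewrite card_full_blocks card_last_block.
Qed.

End Construction.

Theorem mainTheorem10 (s t : nat) (hs : 7 <= s) (ht : 7 <= t) :
  let m := minn s t in
  let r := if (m %% 3 == 0) || (m %% 3 == 1) then 0
           else if s == t then 1 else 2 in
  is_strong_metric_dim (modprod (cycle_adj s) (cycle_adj t))
    (s * t - 4 * minn (s %/ 3) (t %/ 3) - r).
Proof.
move=> m r.
have irr_s : irreflexive (cycle_adj s) by apply: cycle_adj_irr; lia.
have irr_t : irreflexive (cycle_adj t) by apply: cycle_adj_irr; lia.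
have -> : s * t - 4 * minn (s %/ 3) (t %/ 3) - r =
          #|{: 'I_s * 'I_t}| - cycle_modprod_clique_number s t.
  by rewrite card_prod !card_ord -subnDA.
apply: strong_metric_dim_clique.
- exact: modprod_sym (@cycle_adj_sym s) (@cycle_adj_sym t).
- by move=> p; rewrite modprodE // eqxx.
- exact: cycle_modprod_common_nbr.
- by rewrite card_prod !card_ord; lia.
- exact: cycle_modprod_edge_ext.
- exists (diag_blocks s t).
  split; first exact/(clique_modprodP irr_s irr_t)/diag_blocks_coherent.
  apply/eqP; rewrite eqn_leq card_diag_blocks_ge // andbT.
  by apply: card_coherent_le_clique_number => //; exact: diag_blocks_coherent.
- by move=> K /(clique_modprodP irr_s irr_t); apply: card_coherent_le_clique_number.
Qed.
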